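(* Let $G=(V,E,s_0,s_1)$ be a switch graph and $o,d\in V$ with $o\neq d$, such that $\textsc{Run}(G,o,d)$ terminates. Let $\mathbf{x}(G,o,d):E\to\mathbb{N}_0$ (the run profile) assign to each edge the number of times it is traversed during $\textsc{Run}(G,o,d)$. Then $\mathbf{x}(G,o,d)$ is a switching flow.
   Context: A switch graph is a 4-tuple $G=(V,E,s_0,s_1)$ where $V$ is a finite vertex set, $s_0,s_1:V\to V$, and $E=\{(v,s_0(v)):v\in V\}\cup\{(v,s_1(v)):v\in V\}$ (loops allowed; possibly $s_0(v)=s_1(v)$). The procedure $\textsc{Run}(G,o,d)$: maintain arrays $\mathtt{s\_curr},\mathtt{s\_next}$ indexed by $V$, initially $\mathtt{s\_curr}[v]=s_0(v)$, $\mathtt{s\_next}[v]=s_1(v)$; set $v:=o$; while $v\neq d$: $w:=\mathtt{s\_curr}[v]$, swap $\mathtt{s\_curr}[v],\mathtt{s\_next}[v]$, $v:=w$ (traversing edge $(v,w)$). For $v\in V$, $E^+(v)$ and $E^-(v)$ denote the outgoing and incoming edges of $v$. A switching flow is a function $\mathbf{x}:E\to\mathbb{N}_0$, $e\mapsto x_e$, such that for all $v\in V$: (a) $\sum_{e\in E^+(v)}x_e-\sum_{e\in E^-(v)}x_e$ equals $1$ if $v=o$, $-1$ if $v=d$, and $0$ otherwise; and (b) $0\le x_{(v,s_1(v))}\le x_{(v,s_0(v))}\le x_{(v,s_1(v))}+1$. *)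

From mathcomp Require Import all_boot all_order all_algebra.
Set Implicit Arguments. Unset Strict Implicit. Unset Printing Implicit Defensive.
Import GRing.Theory Num.Theory.

Section SwitchGraph.
Variable V : finType.
Variables (s0 s1 : V -> V).

Definition edges : {set V * V} :=
  [set e : V * V | (e.2 == s0 e.1) || (e.2 == s1 e.1)].

Record run_state := RunState {
  rs_pos : V;
  rs_curr : V -> V;
  rs_next : V -> V }.

Definition run_init (o : V) : run_state := RunState o s0 s1.

Definition run_step (st : run_state) : run_state :=
  let v := rs_pos st in
  let w := rs_curr st v in
  RunState w
    (fun u => if u == v then rs_next st v else rs_curr st u)
    (fun u => if u == v then rs_curr st v else rs_next st u).

Definition run_traj (o : V) (k : nat) : run_state := iter k run_step (run_init o).

Definition run_terminates_in (o d : V) (n : nat) : Prop :=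
  rs_pos (run_traj o n) = d /\ forall k, k < n -> rs_pos (run_traj o k) <> d.

Definition traversed_edge (o : V) (k : nat) : V * V :=
  (rs_pos (run_traj o k), rs_pos (run_traj o k.+1)).

Definition run_profile (o : V) (n : nat) (e : V * V) : nat :=
  \sum_(k < n) (traversed_edge o k == e).

(* Switching flow (values of x outside E are irrelevant). *)
Definition switching_flow (o d : V) (x : V * V -> nat) : Prop :=
  (forall v : V,
     ((\sum_(e in edges | e.1 == v) x e)%:Z - (\sum_(e in edges | e.2 == v) x e)%:Z
      = (if v == o then 1 else if v == d then -1 else 0))%R) /\
  (forall v : V, x (v, s1 v) <= x (v, s0 v) <= x (v, s1 v) + 1).

End SwitchGraph.

From mathcomp Require Import all_boot all_order all_algebra.
From mathcomp Require Import zify.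

Set Implicit Arguments.
Unset Strict Implicit.
Unset Printing Implicit Defensive.

(* Every step of the run leaves the current vertex along an edge and enters the
   next one, so out-flow minus in-flow at v telescopes to [v = o] - [v = d].
   The switch of v is swapped exactly at the departures from v, hence its
   state after k steps is determined by the parity of the number of departures
   so far; the departures alternate between (v, s0 v) and (v, s1 v), starting
   with s0, which gives the balance condition. *)

Section RunProfile.
Variable V : finType.
Variables (s0 s1 : V -> V).
Variable o : V.

Local Notation pos k := (rs_pos (run_traj s0 s1 o k)).
Local Notation state k := (run_traj s0 s1 o k).
Local Notation profile := (run_profile s0 s1 o).

Definition departures (k : nat) (u : V) : nat := \sum_(i < k) (pos i == u).

Lemma departuresS k u : departures k.+1 u = departures k u + (pos k == u).
Proof. by rewrite /departures big_ord_recr. Qed.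

Lemma run_profileS k e :
  profile k.+1 e = profile k e + (traversed_edge s0 s1 o k == e).
Proof. by rewrite /run_profile big_ord_recr. Qed.

Lemma switch_state k u :
  rs_curr (state k) u = (if odd (departures k u) then s1 u else s0 u) /\
  rs_next (state k) u = (if odd (departures k u) then s0 u else s1 u).
Proof.
elim: k => [|k [IHcurr IHnext]]; first by rewrite /departures big_ord0.
rewrite departuresS /run_traj iterS -/(run_traj s0 s1 o k) /run_step /=.
case: (eqVneq u (pos k)) => [<-|_]; last by rewrite addn0.
by rewrite addn1 oddS IHcurr IHnext; case: odd.
Qed.

Lemma pos_next k :
  pos k.+1 = if odd (departures k (pos k)) then s1 (pos k) else s0 (pos k).
Proof. by rewrite -(switch_state k (pos k)).1. Qed.

Lemma traversed_edge_in k : traversed_edge s0 s1 o k \in edges s0 s1.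
Proof. by rewrite inE /traversed_edge pos_next; case: odd; rewrite eqxx ?orbT. Qed.

Lemma sum_run_profile n (p : pred (V * V)) :
  \sum_(e in edges s0 s1 | p e) profile n e = \sum_(k < n) p (traversed_edge s0 s1 o k).
Proof.
rewrite /run_profile exchange_big /=; apply: eq_bigr => k _.
set t := traversed_edge s0 s1 o k.
rewrite big_mkcond (bigD1 t) //= big1 => [|e /negbTE ne]; last by rewrite eq_sym ne; case: ifP.
by rewrite traversed_edge_in eqxx addn0; case: (p t).
Qed.

Definition arrivals (k : nat) (u : V) : nat := \sum_(i < k) (pos i.+1 == u).

Lemma departures_arrivals k u :
  departures k u + (pos k == u) = (pos 0 == u) + arrivals k u.
Proof.
elim: k => [|k IHk]; first by rewrite /departures /arrivals !big_ord0 addn0.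
by rewrite departuresS /arrivals big_ord_recr addnA -IHk.
Qed.

Lemma run_profile_switch k v : s0 v != s1 v ->
  profile k (v, s0 v) = profile k (v, s1 v) + odd (departures k v).
Proof.
move=> s01; have s10 : s1 v != s0 v by rewrite eq_sym.
elim: k => [|k IHk]; first by rewrite /run_profile /departures !big_ord0.
rewrite !run_profileS departuresS /traversed_edge pos_next !xpair_eqE.
case: (eqVneq (pos k) v) => [->|_]; last by rewrite !addn0.
rewrite IHk addn1 oddS /=; case: odd; rewrite eqxx ?(negbTE s01) ?(negbTE s10) /=; lia.
Qed.

End RunProfile.

Theorem mainTheorem2 (V : finType) (s0 s1 : V -> V) (o d : V) (n : nat) :
  o <> d ->
  run_terminates_in s0 s1 o d n ->
  switching_flow s0 s1 o d (run_profile s0 s1 o n).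
Proof.
move=> /eqP o_neq_d [end_d _]; split=> v.
- have out_v := sum_run_profile s0 s1 o n (fun e => e.1 == v).
  have in_v := sum_run_profile s0 s1 o n (fun e => e.2 == v).
  rewrite {}out_v {}in_v -/(departures s0 s1 o n v) -/(arrivals s0 s1 o n v).
  have := departures_arrivals s0 s1 o n v; rewrite end_d.
  case: (eqVneq v o) => [->|_]; first by rewrite eq_sym (negbTE o_neq_d); lia.
  by case: (eqVneq v d) => [->|_]; lia.
- case: (eqVneq (s0 v) (s1 v)) => [-> | s01]; first by rewrite leqnn leq_addr.
  by rewrite run_profile_switch //; case: odd; rewrite ?addn0 ?leqnn ?leq_addr.
Qed.
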